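(* The following single-statistic generating functions hold over $S_n(123,132)$: $$\sum_{n\ge0}\sum_{\pi\in S_n(123,132)}x^nu^{\operatorname{lrmax}(\pi)}=\frac{1-2x+ux-ux^2+u^2x^2}{1-2x},\qquad \sum_{n\ge0}\sum_{\pi\in S_n(123,132)}x^nv^{\operatorname{rlmax}(\pi)}=\frac{1-x}{1-x-vx},$$ $$\sum_{n\ge0}\sum_{\pi\in S_n(123,132)}x^ns^{\operatorname{lrmin}(\pi)}=\frac{1-sx}{1-2sx-sx^2+s^2x^2},\qquad \sum_{n\ge0}\sum_{\pi\in S_n(123,132)}x^nt^{\operatorname{rlmin}(\pi)}=\frac{1-2x+tx-tx^2+t^2x^2}{1-2x}.$$
   Context: For $n\ge 0$, $S_n$ denotes the set of permutations $\pi=\pi_1\cdots\pi_n$ of $[n]=\{1,\dots,n\}$ ($S_0$ consists of the empty permutation, for which all statistics are $0$). $S_n(123,132)$ is the set of $\pi\in S_n$ containing no subsequence order-isomorphic to $123$ or to $132$. $\pi_i$ is a left-to-right maximum (resp. minimum) if it is larger (resp. smaller) than every $\pi_j$ with $j<i$, and a right-to-left maximum (resp. minimum) if it is larger (resp. smaller) than every $\pi_j$ with $j>i$; $\operatorname{lrmax},\operatorname{lrmin},\operatorname{rlmax},\operatorname{rlmin}$ count these. *)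

From mathcomp Require Import all_boot all_order all_algebra all_fingroup.
Set Implicit Arguments. Unset Strict Implicit. Unset Printing Implicit Defensive.
Import GRing.Theory.
Local Open Scope ring_scope.

(* pi in 'S_n, pi_i = pi i (values 0..n-1, order-isomorphic to 1..n) *)
Definition av123_132 n (p : 'S_n) : bool :=
  [forall i : 'I_n, forall j : 'I_n, forall k : 'I_n,
     ((i < j)%N && (j < k)%N) ==>
     ~~ ( ((p i < p j)%N && (p j < p k)%N)
       || ((p i < p k)%N && (p k < p j)%N) )].

Definition lrmax n (p : 'S_n) : nat :=
  #|[set i : 'I_n | [forall j : 'I_n, (j < i)%N ==> (p j < p i)%N]]|.
Definition rlmax n (p : 'S_n) : nat :=
  #|[set i : 'I_n | [forall j : 'I_n, (i < j)%N ==> (p j < p i)%N]]|.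
Definition lrmin n (p : 'S_n) : nat :=
  #|[set i : 'I_n | [forall j : 'I_n, (j < i)%N ==> (p i < p j)%N]]|.
Definition rlmin n (p : 'S_n) : nat :=
  #|[set i : 'I_n | [forall j : 'I_n, (i < j)%N ==> (p i < p j)%N]]|.

(* coefficient of x^n: sum over S_n(123,132) of u^{stat pi}, in Z[u] *)
Definition gfcoef (stat : forall n, 'S_n -> nat) (n : nat) : {poly int} :=
  \sum_(p : 'S_n | av123_132 p) 'X^(stat n p).

(* The formal power series sum_n F n x^n (coefficients in R) equals the
   rational function N/D (N, D polynomials in x, D`_0 = 1 invertible):
   i.e. F * D = N as formal power series. *)
Definition fps_eq_ratio (R : nzRingType) (F : nat -> R) (N D : {poly R}) : Prop :=
  forall n : nat, \sum_(k < n.+1) F k * D`_(n - k) = N`_n.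

(* the statistic variable u (resp. v, s, t) as a constant in {poly {poly int}} *)
Definition uvar : {poly {poly int}} := ('X : {poly int})%:P.

From mathcomp Require Import all_boot all_order all_algebra all_fingroup.
From mathcomp Require Import zify ring.
Set Implicit Arguments. Unset Strict Implicit. Unset Printing Implicit Defensive.
Import GRing.Theory.

(** Avoiding 123 and 132 means that no entry is smaller than two later
    entries, i.e. the first entry of [p] in S_(n+1)(123,132) is one of the two
    largest values and the rest of [p] is, after standardization, any element
    of S_n(123,132).  In the 0-based encoding [p = lift_perm ord0 a q] with
    [a] = n or n-1, so that |S_(n+1)(123,132)| = 2^n.  Under this prepending,
    lrmax becomes 1 or 2 regardless of [q], rlmax (resp. rlmin) gains one exactly
    when [a] is the largest (resp. smallest) value, and lrmin becomes one plus
    the number of left-to-right minima of [q] below [a], which forces a second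
    sequence (minima other than the maximum). *)

Lemma ltn_lift2 n (h : 'I_n.+1) (i j : 'I_n) : (lift h i < lift h j) = (i < j).
Proof. by rewrite /= !ltnNge leq_bump2. Qed.

Lemma ltn_liftR n (h : 'I_n.+1) (i : 'I_n) : (h < lift h i) = (h <= i).
Proof. by rewrite /= /bump; case: leqP; lia. Qed.

Lemma ltn_liftL n (h : 'I_n.+1) (i : 'I_n) : (lift h i < h) = (i < h).
Proof. by rewrite /= /bump; case: leqP; lia. Qed.

Lemma lift_ltn n (h : 'I_n.+1) (i : 'I_n) : i < h -> lift h i = i :> nat.
Proof. by move=> lt_ih; rewrite /= /bump leqNgt lt_ih. Qed.

Lemma forall_ord_recl n (P : pred 'I_n.+1) :
  [forall i, P i] = P ord0 && [forall k : 'I_n, P (lift ord0 k)].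
Proof.
apply/forallP/andP => [P_all | [P0 /forallP P_lift] i].
  by split=> //; apply/forallP.
by case: (unliftP ord0 i) => [k|] ->.
Qed.

Lemma card_ord_recl n (P : pred 'I_n.+1) :
  #|[set i | P i]| = P ord0 + #|[set k : 'I_n | P (lift ord0 k)]|.
Proof.
by rewrite -!sum1dep_card big_mkcond big_ord_recl [in RHS]big_mkcond; case: (P ord0).
Qed.

Lemma big_perm_lift0 (R : Type) (idx : R) (op : Monoid.com_law idx) n
    (F : 'S_n.+1 -> R) :
  \big[op/idx]_(p : 'S_n.+1) F p =
  \big[op/idx]_(a : 'I_n.+1) \big[op/idx]_(q : 'S_n) F (lift_perm ord0 a q).
Proof.
pose f (aq : 'I_n.+1 * 'S_n) := lift_perm ord0 aq.1 aq.2.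
have f_inj : injective f.
  move=> [a q] [b r]; rewrite /f /= => eq_f.
  have eq_ab : a = b by rewrite -(lift_perm_id ord0 a q) eq_f lift_perm_id.
  rewrite -{}eq_ab in eq_f *; congr (_, _); apply/permP => k.
  by apply: (@lift_inj _ a); rewrite -!(lift_perm_lift ord0) eq_f.
have f_bij : bijective f.
  by apply: inj_card_bij f_inj _; rewrite card_prod !card_Sn card_ord factS.
by rewrite pair_big (reindex f (onW_bij _ f_bij)).
Qed.

Lemma av123_132E n (p : 'S_n) : av123_132 p =
  [forall i : 'I_n, forall j : 'I_n, forall k : 'I_n,
     (i < j < k) ==> ~~ ((p i < p j) && (p i < p k))].
Proof.
apply: eq_forallb => i; apply: eq_forallb => j; apply: eq_forallb => k.
case: (boolP (i < j < k)) => //= /andP[_ lt_jk].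
have : p j != p k :> nat by rewrite val_eqE (inj_eq perm_inj) -val_eqE neq_ltn lt_jk.
move: (p i : nat) (p j : nat) (p k : nat) => x y z.
by case: (ltngtP y z) => //= lt_yz _; case: (ltnP x y); case: (ltnP x z) => //= *; lia.
Qed.

Lemma no_pair_geq_perm n (q : 'S_n) (a : nat) :
  [forall j : 'I_n, forall k : 'I_n, (j < k) ==> ~~ ((a <= q j) && (a <= q k))] =
  (n.-1 <= a).
Proof.
apply/idP/idP => [/forallP no_pair | le_a]; last first.
  apply/forallP => j; apply/forallP => k; apply/implyP => lt_jk.
  apply/negP => /andP[le_aj le_ak].
  have /val_inj/perm_inj eq_jk : q j = q k :> nat.
    by move: (ltn_ord (q j)) (ltn_ord (q k)); lia.
  by rewrite eq_jk ltnn in lt_jk.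
rewrite leqNgt; apply/negP => lt_a.
have lt_top : n.-1 < n by lia.
have lt_next : n.-2 < n by lia.
pose j1 := (q^-1 (Ordinal lt_top))%g; pose j2 := (q^-1 (Ordinal lt_next))%g.
have [le_a1 le_a2] : a <= q j1 /\ a <= q j2 by rewrite !permKV /=; lia.
have ne12 : j1 != j2 by rewrite (inj_eq perm_inj) -val_eqE /=; lia.
case: (ltngtP j1 j2) => [lt12 | lt21 | /val_inj eq12]; last by rewrite eq12 eqxx in ne12.
- by move: (no_pair j1) => /forallP/(_ j2); rewrite lt12 le_a1 le_a2.
- by move: (no_pair j2) => /forallP/(_ j1); rewrite lt21 le_a1 le_a2.
Qed.

Lemma forall_lt3_ord_recl n (R : 'I_n.+1 -> 'I_n.+1 -> 'I_n.+1 -> bool) :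
  [forall i : 'I_n.+1, forall j : 'I_n.+1, forall k : 'I_n.+1,
     (i < j < k) ==> R i j k] =
  [forall j : 'I_n, forall k : 'I_n, (j < k) ==> R ord0 (lift ord0 j) (lift ord0 k)] &&
  [forall i : 'I_n, forall j : 'I_n, forall k : 'I_n,
     (i < j < k) ==> R (lift ord0 i) (lift ord0 j) (lift ord0 k)].
Proof.
apply/forallP/andP => [R_all | [R0 R_lift] i].
  split; first by apply/forallP => j; apply/forallP => k;
    move/forallP/(_ (lift ord0 j))/forallP/(_ (lift ord0 k)): (R_all ord0).
  apply/forallP => i; apply/forallP => j; apply/forallP => k.
  by move/forallP/(_ (lift ord0 j))/forallP/(_ (lift ord0 k)): (R_all (lift ord0 i)).
apply/forallP => j; apply/forallP => k; apply/implyP => /andP[lt_ij lt_jk].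
case: (unliftP ord0 j) lt_ij lt_jk => [j'|] -> // lt_ij lt_jk.
case: (unliftP ord0 k) lt_jk => [k'|] -> // lt_jk.
case: (unliftP ord0 i) lt_ij => [i'|] -> lt_ij.
  move/forallP/(_ i')/forallP/(_ j')/forallP/(_ k')/implyP: R_lift.
  by apply; exact/andP.
by move/forallP/(_ j')/forallP/(_ k')/implyP: R0; apply.
Qed.

Lemma av123_132_lift n (q : 'S_n) (a : 'I_n.+1) :
  av123_132 (lift_perm ord0 a q) = av123_132 q && (n.-1 <= a).
Proof.
rewrite !av123_132E forall_lt3_ord_recl -(no_pair_geq_perm q) andbC.
congr (_ && _); apply: eq_forallb => i; apply: eq_forallb => j; [apply: eq_forallb => k|].
  by rewrite !lift_perm_lift !ltn_lift2.
by rewrite !lift_perm_lift lift_perm_id !ltn_liftR.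
Qed.

Lemma forall_perm n (q : 'S_n) (P : pred 'I_n) : [forall k, P (q k)] = [forall v, P v].
Proof.
apply/forallP/forallP => [P_q v | P_all k]; last exact: P_all.
by rewrite -(permKV q v); apply: P_q.
Qed.

Lemma forall_ltn_ord n (c : 'I_n.+1) : [forall v : 'I_n, v < c] = (c == n :> nat).
Proof.
apply/forallP/eqP => [all_lt | eq_cn v]; last by rewrite eq_cn ltn_ord.
case: (ltnP c n) => [lt_cn | ]; last by move: (ltn_ord c); lia.
by move: (all_lt (Ordinal lt_cn)); rewrite ltnn.
Qed.

Lemma forall_geq_ord n (c : 'I_n.+1) : [forall v : 'I_n, c <= v] = (c == 0 :> nat).
Proof.
apply/forallP/eqP => [all_geq | -> //].
case: (posnP c) => // gt0_c.
have lt_pred : c.-1 < n by move: (ltn_ord c); lia.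
by move: (all_geq (Ordinal lt_pred)) => /=; lia.
Qed.

Lemma forall_ltn_ord0 n (P : pred 'I_n.+1) : [forall j : 'I_n.+1, (j < @ord0 n) ==> P j].
Proof. by apply/forallP => j; rewrite ltn0. Qed.

Lemma card_set_ord0 (A : {set 'I_0}) : #|A| = 0.
Proof. by apply: eq_card0 => -[]. Qed.

Definition lrmin_below n (p : 'S_n) (c : nat) : nat :=
  #|[set i : 'I_n | (p i < c) && [forall j : 'I_n, (j < i) ==> (p i < p j)]]|.

Lemma lrmin_below_size n (p : 'S_n) : lrmin_below p n = lrmin p.
Proof. by apply: eq_card => i; rewrite !inE ltn_ord. Qed.

Section LiftStatistics.
Variables (n : nat) (q : 'S_n) (a : 'I_n.+1).
Let p := lift_perm ord0 a q.

Lemma lrmax_lift :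
  lrmax p = #|[set k : 'I_n | (a <= q k) && [forall j : 'I_n, (j < k) ==> (q j < q k)]]|.+1.
Proof.
rewrite /lrmax card_ord_recl forall_ltn_ord0 add1n; congr _.+1.
apply: eq_card => k; rewrite !inE forall_ord_recl !lift_perm_lift lift_perm_id !ltn_liftR.
rewrite leq0n; congr (_ && _).
by apply: eq_forallb => j; rewrite !lift_perm_lift !ltn_lift2.
Qed.

Lemma lrmax_lift_top : n.-1 <= a -> lrmax p = (a < n).+1.
Proof.
move=> le_a; rewrite lrmax_lift; congr _.+1.
case: (ltnP a n) => [lt_an | le_na]; last first.
  apply: eq_card0 => k; rewrite !inE leqNgt.
  by rewrite (leq_trans (ltn_ord (q k)) le_na).
pose k0 := (q^-1 (Ordinal lt_an))%g.
have q_k0 : q k0 = a :> nat by rewrite permKV.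
have ne_val j : j != k0 -> (q j : nat) != a.
  by move=> ne_j; rewrite -q_k0 (inj_eq val_inj) (inj_eq perm_inj).
rewrite (_ : [set k | _] = [set k0]) ?cards1 //; apply/setP => k; rewrite !inE.
have [-> | /ne_val] := eqVneq k k0; last by move: (ltn_ord (q k)); lia.
rewrite q_k0 leqnn; apply/forallP => j; apply/implyP => lt_j.
have /ne_val : j != k0 by apply: contraTneq lt_j => ->; rewrite ltnn.
by move: (ltn_ord (q j)); lia.
Qed.

Lemma rlmax_lift : rlmax p = (a == n :> nat) + rlmax q.
Proof.
rewrite /rlmax card_ord_recl; congr (_ + _).
  rewrite forall_ord_recl ltnn -forall_ltn_ord -(forall_perm q (fun v => v < a)).
  congr (nat_of_bool _); apply: eq_forallb => k.
  by rewrite lift_perm_lift lift_perm_id ltn_liftL.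
apply: eq_card => k; rewrite !inE forall_ord_recl /=.
by apply: eq_forallb => j; rewrite !lift_perm_lift !ltn_lift2.
Qed.

Lemma rlmin_lift : rlmin p = (a == 0 :> nat) + rlmin q.
Proof.
rewrite /rlmin card_ord_recl; congr (_ + _).
  rewrite forall_ord_recl ltnn -forall_geq_ord -(forall_perm q (fun v => a <= v)).
  congr (nat_of_bool _); apply: eq_forallb => k.
  by rewrite lift_perm_lift lift_perm_id !ltn_liftR leq0n.
apply: eq_card => k; rewrite !inE forall_ord_recl /=.
by apply: eq_forallb => j; rewrite !lift_perm_lift !ltn_lift2.
Qed.

Lemma lrmin_below_lift c : lrmin_below p c = (a < c) + lrmin_below q (minn a c).
Proof.
rewrite /lrmin_below card_ord_recl forall_ltn_ord0 lift_perm_id andbT; congr (_ + _).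
apply: eq_card => k; rewrite !inE forall_ord_recl !lift_perm_lift lift_perm_id.
rewrite ltn_liftL ltn_liftR leq0n leq_min.
case: (ltnP (q k) a) => [lt_ka | _]; last by rewrite andbF.
rewrite {1}(lift_ltn lt_ka) /=; congr (_ && _).
by apply: eq_forallb => j; rewrite lift_perm_lift !ltn_lift2.
Qed.

Lemma lrmin_lift : lrmin p = (lrmin_below q a).+1.
Proof.
rewrite -lrmin_below_size lrmin_below_lift ltn_ord add1n.
by rewrite (minn_idPl (ltnW (ltn_ord a))).
Qed.

End LiftStatistics.

Section BigAvoiders.
Variables (R : Type) (idx : R) (op : Monoid.com_law idx).

Lemma big_av123_132_lift n (F : 'S_n.+1 -> R) :
  \big[op/idx]_(p : 'S_n.+1 | av123_132 p) F p =
  \big[op/idx]_(a : 'I_n.+1 | n.-1 <= a)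
     \big[op/idx]_(q : 'S_n | av123_132 q) F (lift_perm ord0 a q).
Proof.
rewrite big_mkcond big_perm_lift0 [RHS]big_mkcond; apply: eq_bigr => a _.
rewrite big_mkcond; under eq_bigr do rewrite av123_132_lift.
case: (n.-1 <= a); last by rewrite big1 // => q; rewrite andbF.
by rewrite [RHS]big_mkcond; apply: eq_bigr => q _; rewrite andbT.
Qed.

Lemma big_av123_132_0 (F : 'S_0 -> R) :
  \big[op/idx]_(q : 'S_0 | av123_132 q) F q = F 1%g.
Proof.
have S0_1 (q : 'S_0) : q = 1%g by apply/permP => -[].
rewrite (big_pred1 1%g) // => q.
by apply/idP/eqP => [_ | ->]; [exact: S0_1 | apply/forallP => -[]].
Qed.

Lemma big_av123_132_1 (F : 'S_1 -> R) :
  \big[op/idx]_(p : 'S_1 | av123_132 p) F p = F (lift_perm ord0 ord0 1%g).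
Proof. by rewrite big_av123_132_lift big_ord1_cond leq0n big_av123_132_0. Qed.

Lemma big_av123_132_SS m (F : 'S_m.+2 -> R) :
  \big[op/idx]_(p : 'S_m.+2 | av123_132 p) F p =
  \big[op/idx]_(q : 'S_m.+1 | av123_132 q)
     op (F (lift_perm ord0 ord_max q))
        (F (lift_perm ord0 (widen_ord (leqnSn m.+1) ord_max) q)).
Proof.
rewrite [RHS]big_split big_av123_132_lift big_mkcond !big_ord_recr /= leqnn leqnSn.
rewrite big1 => [|a _]; last by rewrite leqNgt ltn_ord.
by rewrite Monoid.mul1m Monoid.mulmC.
Qed.

End BigAvoiders.

Lemma card_av123_132 n : #|[set p : 'S_n.+1 | av123_132 p]| = 2 ^ n.
Proof.
rewrite -sum1dep_card; elim: n => [|m IHm]; first by rewrite big_av123_132_1.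
by rewrite big_av123_132_SS big_split /= IHm expnS mul2n addnn.
Qed.

Local Open Scope ring_scope.

Lemma gfcoef0 stat : stat 0%N 1%g = 0%N -> gfcoef stat 0 = 1.
Proof. by move=> stat0; rewrite /gfcoef big_av123_132_0 stat0 expr0. Qed.

Lemma gfcoef1 stat : gfcoef stat 1 = 'X ^+ stat 1%N (lift_perm ord0 ord0 1%g).
Proof. by rewrite /gfcoef big_av123_132_1. Qed.

Lemma gfcoefSS stat m : gfcoef stat m.+2 =
  \sum_(q : 'S_m.+1 | av123_132 q)
     ('X ^+ stat _ (lift_perm ord0 ord_max q) +
      'X ^+ stat _ (lift_perm ord0 (widen_ord (leqnSn m.+1) ord_max) q)).
Proof. exact: big_av123_132_SS. Qed.

Lemma gf_lrmax_0 : gfcoef lrmax 0 = 1.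
Proof. exact: gfcoef0 (card_set_ord0 _). Qed.

Lemma gf_lrmax_1 : gfcoef lrmax 1 = 'X.
Proof. by rewrite gfcoef1 lrmax_lift_top. Qed.

Lemma gf_lrmax_SS m : gfcoef lrmax m.+2 = ('X + 'X ^+ 2) *+ 2 ^ m.
Proof.
rewrite gfcoefSS; under eq_bigr do rewrite !lrmax_lift_top ?leqnn ?leqnSn //= ltnn.
by rewrite sumr_const -(card_av123_132 m) cardsE expr1.
Qed.

Lemma gf_rlmin_0 : gfcoef rlmin 0 = 1.
Proof. exact: gfcoef0 (card_set_ord0 _). Qed.

Lemma gf_rlmin_1 : gfcoef rlmin 1 = 'X.
Proof. by rewrite gfcoef1 rlmin_lift /rlmin card_set_ord0. Qed.

Lemma gf_rlmin_rec m : gfcoef rlmin m.+2 = (1 + 'X ^+ (m == 0)%N) * gfcoef rlmin m.+1.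
Proof.
rewrite gfcoefSS /gfcoef mulr_sumr; apply: eq_bigr => q _.
by rewrite !rlmin_lift /= add0n exprD mulrDl mul1r.
Qed.

Lemma gf_rlmin_SS m : gfcoef rlmin m.+2 = ('X + 'X ^+ 2) *+ 2 ^ m.
Proof.
elim: m => [|m IHm]; first by rewrite gf_rlmin_rec gf_rlmin_1 mulrDl mul1r expr1 expr2.
by rewrite gf_rlmin_rec IHm /= expr0 expnS mulnC mulrnA mulr2n mulrDl mul1r.
Qed.

Lemma gf_rlmax_0 : gfcoef rlmax 0 = 1.
Proof. exact: gfcoef0 (card_set_ord0 _). Qed.

Lemma gf_rlmax_1 : gfcoef rlmax 1 = 'X.
Proof. by rewrite gfcoef1 rlmax_lift /rlmax card_set_ord0. Qed.

Lemma gf_rlmax_rec m : gfcoef rlmax m.+2 = ('X + 1) * gfcoef rlmax m.+1.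
Proof.
rewrite gfcoefSS /gfcoef mulr_sumr; apply: eq_bigr => q _.
by rewrite !rlmax_lift eqxx ltn_eqF // add1n add0n exprS mulrDl mul1r.
Qed.

(* Left-to-right minima other than the largest entry: these are the ones that
   survive when the second largest value is placed in front. *)
Definition gf_lrmin_below n : {poly int} :=
  \sum_(p : 'S_n | av123_132 p) 'X ^+ lrmin_below p n.-1.

Lemma gf_lrmin_0 : gfcoef lrmin 0 = 1.
Proof. exact: gfcoef0 (card_set_ord0 _). Qed.

Lemma gf_lrmin_1 : gfcoef lrmin 1 = 'X.
Proof. by rewrite gfcoef1 lrmin_lift /lrmin_below card_set_ord0. Qed.

Lemma gf_lrmin_below_1 : gf_lrmin_below 1 = 1.
Proof.
by rewrite /gf_lrmin_below big_av123_132_1 lrmin_below_lift /lrmin_below card_set_ord0.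
Qed.

Lemma gf_lrmin_rec m :
  gfcoef lrmin m.+2 = 'X * gfcoef lrmin m.+1 + 'X * gf_lrmin_below m.+1.
Proof.
rewrite gfcoefSS big_split !mulr_sumr /=; congr (_ + _); apply: eq_bigr => q _.
  by rewrite lrmin_lift lrmin_below_size exprS.
by rewrite lrmin_lift exprS.
Qed.

Lemma gf_lrmin_below_rec m :
  gf_lrmin_below m.+2 = gfcoef lrmin m.+1 + 'X * gf_lrmin_below m.+1.
Proof.
rewrite /gf_lrmin_below big_av123_132_SS big_split mulr_sumr /=.
congr (_ + _); apply: eq_bigr => q _; rewrite lrmin_below_lift /=.
  by rewrite ltnn minnn lrmin_below_size.
by rewrite ltnSn (minn_idPl (leqnSn m)) exprS.
Qed.

Lemma gf_lrmin_rec2 m : gfcoef lrmin m.+3 =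
  'X *+ 2 * gfcoef lrmin m.+2 + ('X - 'X ^+ 2) * gfcoef lrmin m.+1.
Proof.
rewrite gf_lrmin_rec gf_lrmin_below_rec.
have -> : 'X * gf_lrmin_below m.+1 = gfcoef lrmin m.+2 - 'X * gfcoef lrmin m.+1.
  by rewrite gf_lrmin_rec; ring.
ring.
Qed.

Lemma fps_eq_ratio_deg2 (R : nzRingType) (F : nat -> R) (N D : {poly R}) :
  (forall i, D`_i.+3 = 0) ->
  F 0%N * D`_0 = N`_0 ->
  F 0%N * D`_1 + F 1%N * D`_0 = N`_1 ->
  (forall m, F m * D`_2 + F m.+1 * D`_1 + F m.+2 * D`_0 = N`_m.+2) ->
  fps_eq_ratio F N D.
Proof.
move=> D_deg2 eq0 eq1 eqSS [|[|m]]; rewrite !big_ord_recr /=.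
- by rewrite big_ord0 add0r.
- by rewrite big_ord0 add0r.
rewrite big1 ?add0r => [|k _]; last first.
  by rewrite (_ : (m.+2 - k = (m - k.+1).+3)%N) ?D_deg2 ?mulr0 //; move: (ltn_ord k); lia.
by rewrite -eqSS subnn subSnn (_ : m.+2 - m = 2)%N //; lia.
Qed.

Ltac coef_simpl :=
  rewrite /uvar -?mulrA ?mulr_natl -?polyC_exp
    !(coefD, coefB, coefN, coefMNn, coefMn, coefCM, coefX, coefXn, coef1) /=.

Lemma fps_eq_ratio_doubling (F : nat -> {poly int}) :
  F 0%N = 1 -> F 1%N = 'X -> (forall m, F m.+2 = ('X + 'X ^+ 2) *+ 2 ^ m) ->
  fps_eq_ratio F (1 - 2%:R * 'X + uvar * 'X - uvar * 'X ^+ 2 + uvar ^+ 2 * 'X ^+ 2)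
                 (1 - 2%:R * 'X).
Proof.
move=> F0 F1 FSS; apply: fps_eq_ratio_deg2.
- by move=> i; coef_simpl; ring.
- by coef_simpl; rewrite F0; ring.
- by coef_simpl; rewrite F0 F1; ring.
case=> [|m]; coef_simpl; rewrite !FSS ?F1.
  by ring.
by rewrite expnS mulnC mulrnA; ring.
Qed.

Lemma fps_eq_ratio_lrmax :
  fps_eq_ratio (gfcoef lrmax)
    (1 - 2%:R * 'X + uvar * 'X - uvar * 'X ^+ 2 + uvar ^+ 2 * 'X ^+ 2) (1 - 2%:R * 'X).
Proof. exact: fps_eq_ratio_doubling gf_lrmax_0 gf_lrmax_1 gf_lrmax_SS. Qed.

Lemma fps_eq_ratio_rlmin :
  fps_eq_ratio (gfcoef rlmin)
    (1 - 2%:R * 'X + uvar * 'X - uvar * 'X ^+ 2 + uvar ^+ 2 * 'X ^+ 2) (1 - 2%:R * 'X).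
Proof. exact: fps_eq_ratio_doubling gf_rlmin_0 gf_rlmin_1 gf_rlmin_SS. Qed.

Lemma fps_eq_ratio_rlmax : fps_eq_ratio (gfcoef rlmax) (1 - 'X) (1 - 'X - uvar * 'X).
Proof.
apply: fps_eq_ratio_deg2.
- by move=> i; coef_simpl; ring.
- by coef_simpl; rewrite gf_rlmax_0; ring.
- by coef_simpl; rewrite gf_rlmax_0 gf_rlmax_1; ring.
by move=> m; coef_simpl; rewrite gf_rlmax_rec; ring.
Qed.

Lemma fps_eq_ratio_lrmin :
  fps_eq_ratio (gfcoef lrmin)
    (1 - uvar * 'X) (1 - 2%:R * uvar * 'X - uvar * 'X ^+ 2 + uvar ^+ 2 * 'X ^+ 2).
Proof.
have gf_lrmin_2 : gfcoef lrmin 2 = 'X + 'X ^+ 2.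
  by rewrite gf_lrmin_rec gf_lrmin_1 gf_lrmin_below_1; ring.
apply: fps_eq_ratio_deg2.
- by move=> i; coef_simpl; ring.
- by coef_simpl; rewrite gf_lrmin_0; ring.
- by coef_simpl; rewrite gf_lrmin_0 gf_lrmin_1; ring.
case=> [|m]; coef_simpl.
  by rewrite gf_lrmin_0 gf_lrmin_1 gf_lrmin_2; ring.
by rewrite gf_lrmin_rec2; ring.
Qed.

Theorem corollary2 :
  let x : {poly {poly int}} := 'X in
  let u := uvar in
  [/\ fps_eq_ratio (gfcoef lrmax)
        (1 - 2%:R * x + u * x - u * x ^+ 2 + u ^+ 2 * x ^+ 2) (1 - 2%:R * x),
      fps_eq_ratio (gfcoef rlmax) (1 - x) (1 - x - u * x),
      fps_eq_ratio (gfcoef lrmin)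
        (1 - u * x) (1 - 2%:R * u * x - u * x ^+ 2 + u ^+ 2 * x ^+ 2)
    & fps_eq_ratio (gfcoef rlmin)
        (1 - 2%:R * x + u * x - u * x ^+ 2 + u ^+ 2 * x ^+ 2) (1 - 2%:R * x)].
Proof.
split.
- exact: fps_eq_ratio_lrmax.
- exact: fps_eq_ratio_rlmax.
- exact: fps_eq_ratio_lrmin.
- exact: fps_eq_ratio_rlmin.
Qed.
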